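(* Let $(\Lambda,d)$ be a $k$-graph. Let $(x;(m,n)),(y;(p,q))\in P_\Lambda$ with $p\not\le d(y)$ and $(x;n)\approx(y;p)$. Define $z=x(0,n\wedge d(x))\,\sigma^{p\wedge d(y)}y$. Then (i) $z\in\Lambda^{\le\infty}$; (ii) $m\wedge d(x)=m\wedge d(z)$ and $n\wedge d(x)=n\wedge d(z)$; (iii) $x(m\wedge d(x),n\wedge d(x))=z(m\wedge d(z),n\wedge d(z))$ and $y(p\wedge d(y),q\wedge d(y))=z(n\wedge d(z),(n+q-p)\wedge d(z))$.
   Context: A $k$-graph $(\Lambda,d)$ is a countable category with a degree functor $d:\Lambda\to\mathbb{N}^k$ satisfying unique factorization (if $d(\lambda)=m+n$ there are unique $\mu,\nu$ with $\lambda=\mu\nu$, $d(\mu)=m$, $d(\nu)=n$); $\Lambda^0$ vertices, $r,s$ range/source, $v\Lambda^n=\{\lambda:r(\lambda)=v,d(\lambda)=n\}$; $e_i$ standard basis, $\le$ coordinatewise, $\vee,\wedge$ coordinatewise max/min. For $m\in(\mathbb{N}\cup\{\infty\})^k$, $\Omega_{k,m}$ is the $k$-graph with objects $\{p\in\mathbb{N}^k:p\le m\}$, morphisms $(p,q)$ with $p\le q\le m$, $r(p,q)=p$, $s(p,q)=q$, $d(p,q)=q-p$. A graph morphism $x:\Omega_{k,m}\to\Lambda$ is a degree-preserving functor; $d(x)=m$, $x(a,b)=x((a,b))$, $x(a)=x(a,a)$. It is a boundary path if there is $n_x\in\mathbb{N}^k$, $n_x\le d(x)$, with $x(p)\Lambda^{e_i}=\emptyset$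 whenever $p\in\mathbb{N}^k$, $n_x\le p\le d(x)$, $p_i=d(x)_i$; $\Lambda^{\le\infty}$ is the set of boundary paths. For $p\in\mathbb{N}^k$, $p\le d(x)$, $\sigma^px(a,b)=x(a+p,b+p)$ on $\Omega_{k,d(x)-p}$. For $\lambda\in\Lambda$ with $s(\lambda)=x(0)$, $\lambda x:\Omega_{k,d(\lambda)+d(x)}\to\Lambda$ is the graph morphism with $(\lambda x)(0,d(\lambda))=\lambda$ and $(\lambda x)(0,p)=\lambda\,x(0,p-d(\lambda))$ for $d(\lambda)\le p\le d(\lambda)+d(x)$. Let $V_\Lambda=\{(x;m):x\in\Lambda^{\le\infty},m\in\mathbb{N}^k,m\not\le d(x)\}$ with $(x;m)\approx(y;p)$ iff $x(m\wedge d(x))=y(p\wedge d(y))$ and $m-m\wedge d(x)=p-p\wedge d(y)$. Let $P_\Lambda=\{(x;(m,n)):x\in\Lambda^{\le\infty},m,n\in\mathbb{N}^k,m\le n,n\not\le d(x)\}$. *)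

From Stdlib Require Import ClassicalEpsilon.
From mathcomp Require Import all_boot.

Set Implicit Arguments.
Unset Strict Implicit.
Unset Printing Implicit Defensive.

Definition nvec (k : nat) := 'I_k -> nat.
(* an element of (N u {oo})^k; None encodes oo *)
Definition evec (k : nat) := 'I_k -> option nat.

Definition vzero k : nvec k := fun _ => 0.
Arguments vzero k : clear implicits.
Definition vbasis k (i : 'I_k) : nvec k := fun j => nat_of_bool (j == i).
Definition vadd k (a b : nvec k) : nvec k := fun i => a i + b i.
(* used only when b <= a coordinatewise *)
Definition vsub k (a b : nvec k) : nvec k := fun i => a i - b i.
Definition vmin k (a b : nvec k) : nvec k := fun i => minn (a i) (b i).
Definition vmax k (a b : nvec k) : nvec k := fun i => maxn (a i) (b i).
Definition vle k (a b : nvec k) : Prop := forall i, a i <= b i.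

Definition ele k (p : nvec k) (m : evec k) : Prop :=
  forall i, match m i with Some mi => p i <= mi | None => true end.
Definition emin k (p : nvec k) (m : evec k) : nvec k :=
  fun i => match m i with Some mi => minn (p i) mi | None => p i end.
Definition esub k (m : evec k) (p : nvec k) : evec k :=
  fun i => option_map (fun mi => mi - p i) (m i).
Definition eadd k (a : nvec k) (m : evec k) : evec k :=
  fun i => option_map (fun mi => a i + mi) (m i).

(* A countable category (objects kV, morphisms kM, range r, source s,
   identities, composition comp f g = "f g" defined when s f = r g)
   with a degree functor d : Lambda -> N^k having unique factorisation. *)
Record kgraph (k : nat) := KGraph {
  kV : countType;
  kM : countType;
  krng : kM -> kV;
  ksrc : kM -> kV;
  kid : kV -> kM;
  kcomp : kM -> kM -> kM;
  kdeg : kM -> nvec k;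
  krng_id : forall v, krng (kid v) = v;
  ksrc_id : forall v, ksrc (kid v) = v;
  krng_comp : forall f g, ksrc f = krng g -> krng (kcomp f g) = krng f;
  ksrc_comp : forall f g, ksrc f = krng g -> ksrc (kcomp f g) = ksrc g;
  kcomp_idl : forall f, kcomp (kid (krng f)) f = f;
  kcomp_idr : forall f, kcomp f (kid (ksrc f)) = f;
  kcomp_assoc : forall f g h, ksrc f = krng g -> ksrc g = krng h ->
      kcomp f (kcomp g h) = kcomp (kcomp f g) h;
  kdeg_id : forall v, kdeg (kid v) = vzero k;
  kdeg_comp : forall f g, ksrc f = krng g ->
      kdeg (kcomp f g) = vadd (kdeg f) (kdeg g);
  kfactor : forall (l : kM) (m n : nvec k), kdeg l = vadd m n ->
      exists mu nu, [/\ ksrc mu = krng nu, l = kcomp mu nu,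
                        kdeg mu = m & kdeg nu = n] /\
        forall mu' nu', ksrc mu' = krng nu' -> l = kcomp mu' nu' ->
          kdeg mu' = m -> kdeg nu' = n -> mu' = mu /\ nu' = nu
}.

Arguments krng {k L} _ : rename.
Arguments ksrc {k L} _ : rename.
Arguments kid {k L} _ : rename.
Arguments kcomp {k L} _ _ : rename.
Arguments kdeg {k L} _ : rename.

Section KGraphDefs.
Variables (k : nat) (L : kgraph k).

(* The (unique, when m <= d(l)) factorisation l = mu nu with d(mu) = m. *)
Definition kfact (l : kM L) (m : nvec k) : kM L * kM L :=
  epsilon (inhabits (l, l))
    (fun pr => [/\ ksrc pr.1 = krng pr.2, kcomp pr.1 pr.2 = l,
                   kdeg pr.1 = m & kdeg pr.2 = vsub (kdeg l) m]).

(* A candidate graph morphism x : Omega_{k,m} -> Lambda : its degree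
   m = d(x) and its values x(a,b) (meaningful only for a <= b <= d(x)). *)
Record gpath := GPath { pdeg : evec k; pmor : nvec k -> nvec k -> kM L }.

Definition pvert (x : gpath) (a : nvec k) : kV L := krng (pmor x a a).

Definition is_graph_morphism (x : gpath) : Prop :=
  (forall a, ele a (pdeg x) -> pmor x a a = kid (pvert x a)) /\
  (forall a b, vle a b -> ele b (pdeg x) ->
     [/\ krng (pmor x a b) = pvert x a, ksrc (pmor x a b) = pvert x b
       & kdeg (pmor x a b) = vsub b a]) /\
  (forall a b c, vle a b -> vle b c -> ele c (pdeg x) ->
     pmor x a c = kcomp (pmor x a b) (pmor x b c)).

Definition boundary_path (x : gpath) : Prop :=
  is_graph_morphism x /\
  exists nx : nvec k, ele nx (pdeg x) /\
    forall p : nvec k, vle nx p -> ele p (pdeg x) ->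
      forall i : 'I_k, pdeg x i = Some (p i) ->
        ~ exists l : kM L, krng l = pvert x p /\ kdeg l = vbasis i.

Definition shift (x : gpath) (p : nvec k) : gpath :=
  GPath (esub (pdeg x) p) (fun a b => pmor x (vadd a p) (vadd b p)).

(* lambda x : the graph morphism with (lambda x)(0,d(lambda)) = lambda and
   (lambda x)(0,b) = lambda x(0, b - d(lambda)) for d(lambda) <= b; all
   other values are forced by unique factorisation:
   (lambda x)(0,b) is the initial segment of degree b of
   (lambda x)(0, b \/ d(lambda)), and (lambda x)(a,b) the final segment
   of (lambda x)(0,b) after degree a. *)
Definition concat (l : kM L) (x : gpath) : gpath :=
  GPath (eadd (kdeg l) (pdeg x))
    (fun a b =>
       let F := (kfact (kcomp l (pmor x (vzero k)
                          (vsub (vmax b (kdeg l)) (kdeg l)))) b).1 in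
       (kfact F a).2).

Definition approx (x : gpath) (m : nvec k) (y : gpath) (p : nvec k) : Prop :=
  pvert x (emin m (pdeg x)) = pvert y (emin p (pdeg y)) /\
  vsub m (emin m (pdeg x)) = vsub p (emin p (pdeg y)).

Definition inV (x : gpath) (m : nvec k) : Prop :=
  boundary_path x /\ ~ ele m (pdeg x).

Definition inP (x : gpath) (m n : nvec k) : Prop :=
  [/\ boundary_path x, vle m n & ~ ele n (pdeg x)].

End KGraphDefs.

(* z = λ·σ^{p'}y with λ = x(0,n'), n' = n ∧ d(x), p' = p ∧ d(y).  Every value
   z(a,b) is a segment of one finite path λ·y(p', p'+N), so unique
   factorisation makes z a graph morphism whose values below d(λ) are segments
   of λ and above d(λ) are translates of those of y; z is a boundary path
   because its vertices beyond d(λ) are vertices of y.  The hypothesis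
   (x;n) ≈ (y;p) gives n - n' = p - p', so in each coordinate either
   n ≤ d(x) and p ≤ d(y), or d(z) = n' = d(x); this coordinatewise dichotomy
   yields (ii) and locates the two segments of (iii) inside z. *)
From mathcomp Require Import all_boot.
From Stdlib Require Import ClassicalEpsilon FunctionalExtensionality.
From mathcomp Require Import zify.

Set Implicit Arguments.
Unset Strict Implicit.
Unset Printing Implicit Defensive.

Section Vectors.
Variable k : nat.
Implicit Types (a b c m n p q : nvec k) (d dx dy : evec k).

Lemma nvec_ext a b : (forall i, a i = b i) -> a = b.
Proof. exact: functional_extensionality. Qed.

Lemma vle_refl a : vle a a.
Proof. by []. Qed.

Lemma vle_trans a b c : vle a b -> vle b c -> vle a c.
Proof. by move=> ab bc i; apply: leq_trans (ab i) (bc i). Qed.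

Lemma vle0 a : vle (vzero k) a.
Proof. by []. Qed.

Lemma vle_add2l a b c : vle b c -> vle (vadd a b) (vadd a c).
Proof. by move=> bc i; rewrite leq_add2l. Qed.

Lemma vle_add2r a b c : vle a b -> vle (vadd a c) (vadd b c).
Proof. by move=> ab i; rewrite leq_add2r. Qed.

Lemma vadd0v a : vadd (vzero k) a = a.
Proof. exact: nvec_ext. Qed.

Lemma vsubv0 a : vsub a (vzero k) = a.
Proof. by apply: nvec_ext => i; rewrite /vsub subn0. Qed.

Lemma vsubvv a : vsub a a = vzero k.
Proof. by apply: nvec_ext => i; rewrite /vsub subnn. Qed.

Lemma vsubKC a b : vle a b -> vadd a (vsub b a) = b.
Proof. by move=> ab; apply: nvec_ext => i; rewrite /vadd /vsub subnKC. Qed.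

Lemma vaddv0 a : vadd a (vzero k) = a.
Proof. by apply: nvec_ext => i; rewrite /vadd addn0. Qed.

Lemma vsubK a b : vle a b -> vadd (vsub b a) a = b.
Proof. by move=> ab; apply: nvec_ext => i; rewrite /vadd /vsub subnK. Qed.

Lemma vsub_split a b c : vle a b -> vle b c ->
  vsub c a = vadd (vsub b a) (vsub c b).
Proof.
by move=> ab bc; apply: nvec_ext => i; have := ab i; have := bc i;
  rewrite /vadd /vsub; lia.
Qed.

Lemma ele0 d : ele (vzero k) d.
Proof. by move=> i; case: (d i). Qed.

Lemma ele_vle a b d : vle a b -> ele b d -> ele a d.
Proof.
move=> ab bd i; have := bd i; have := ab i.
by case: (d i) => // di; apply: leq_trans.
Qed.

Lemma ele_emin a d : ele (emin a d) d.
Proof. by move=> i; rewrite /emin; case: (d i) => // di; apply: geq_minr. Qed.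

Lemma vle_emin a b d : vle a b -> vle (emin a d) (emin b d).
Proof. by move=> ab i; rewrite /emin; case: (d i) => [di|]; have := ab i; lia. Qed.

Lemma ele_esub a b d : ele b d -> ele a (esub d b) -> ele (vadd a b) d.
Proof.
move=> bd ad i; have := bd i; have := ad i; rewrite /esub /vadd.
by case: (d i) => //= di; lia.
Qed.

Lemma ele_vsub a b d : ele a d -> ele (vsub a b) (esub d b).
Proof.
by move=> ad i; have := ad i; rewrite /esub /vsub; case: (d i) => //= di; lia.
Qed.

Lemma ele_eadd a b d : ele b d -> ele (vadd a b) (eadd a d).
Proof.
by move=> bd i; have := bd i; rewrite /eadd /vadd; case: (d i) => //= di; lia.
Qed.

Lemma ele_vsub_vmax a b d : ele b (eadd a d) -> ele (vsub (vmax b a) a) d.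
Proof.
by move=> bd i; have := bd i; rewrite /eadd /vsub /vmax; case: (d i) => //= di; lia.
Qed.

Lemma vle_vsub_vmax a b c : vle b c -> vle (vsub b a) (vsub (vmax c a) a).
Proof. by move=> bc i; have := bc i; rewrite /vsub /vmax; lia. Qed.

Lemma vle_vadd_vsub_vmax a b c : vle b c -> vle b (vadd a (vsub (vmax c a) a)).
Proof. by move=> bc i; have := bc i; rewrite /vadd /vsub /vmax; lia. Qed.

Lemma emin_eadd_esub dx dy m n p q : vle m n -> vle p q ->
  vsub n (emin n dx) = vsub p (emin p dy) ->
  let dz := eadd (emin n dx) (esub dy (emin p dy)) in
  [/\ emin m dz = emin m dx, emin n dz = emin n dx
    & emin (vsub (vadd n q) p) dz = vadd (emin n dx) (vsub (emin q dy) (emin p dy))].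
Proof.
move=> mn pq /= nxp.
split; apply: nvec_ext => i; have := mn i; have := pq i;
  have := congr1 (fun v => v i) nxp;
  rewrite /emin /eadd /esub /vsub /vadd; case: (dx i); case: (dy i) => /=; lia.
Qed.

End Vectors.

Section Factorisation.
Variables (k : nat) (L : kgraph k).
Implicit Types (f g h mu nu : kM L) (a b c : nvec k).

Lemma kfactP g a : vle a (kdeg g) ->
  [/\ ksrc (kfact g a).1 = krng (kfact g a).2,
      kcomp (kfact g a).1 (kfact g a).2 = g,
      kdeg (kfact g a).1 = a & kdeg (kfact g a).2 = vsub (kdeg g) a].
Proof.
move=> ag; rewrite /kfact; apply epsilon_spec.
have [mu [nu [[? ? ? ?] _]]] := kfactor (esym (vsubKC ag)).
by exists (mu, nu).
Qed.

Lemma kfactE g mu nu a : ksrc mu = krng nu -> g = kcomp mu nu ->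
  kdeg mu = a -> kfact g a = (mu, nu).
Proof.
move=> munu gE mua.
have dg : kdeg g = vadd a (kdeg nu) by rewrite gE kdeg_comp // mua.
have ag : vle a (kdeg g) by move=> i; rewrite dg leq_addr.
have [mu0 [nu0 [_ uniq]]] := kfactor (esym (vsubKC ag)).
have dnu : kdeg nu = vsub (kdeg g) a.
  by apply: nvec_ext => i; rewrite dg /vadd /vsub addKn.
have [s1 e1 d1 d2] := kfactP ag.
have [-> ->] := uniq _ _ munu gE mua dnu.
have [<- <-] := uniq _ _ s1 (esym e1) d1 d2.
by case: (kfact g a).
Qed.

Lemma kdeg0_kid f : kdeg f = vzero k -> f = kid (krng f).
Proof.
move=> f0.
have [mu [nu [_ uniq]]] := kfactor (etrans f0 (esym (vadd0v (vzero k)))).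
have [-> _] := uniq _ f (ksrc_id _) (esym (kcomp_idl f)) (kdeg_id _) f0.
by have [-> _] := uniq f _ (esym (krng_id _)) (esym (kcomp_idr f)) f0 (kdeg_id _).
Qed.

(* The segment g(a,b) cut out by unique factorisation, as in [concat]; it is
   junk unless a <= b <= d(g). *)
Definition kseg g a b := (kfact (kfact g b).1 a).2.

Lemma ksegE g mu f nu a b :
  ksrc mu = krng f -> ksrc f = krng nu -> g = kcomp mu (kcomp f nu) ->
  kdeg mu = a -> kdeg (kcomp mu f) = b -> kseg g a b = f.
Proof.
move=> muf fnu gE mua muf_b.
have gE' : g = kcomp (kcomp mu f) nu by rewrite gE kcomp_assoc.
by rewrite /kseg (kfactE _ gE' muf_b) ?ksrc_comp //= (kfactE muf erefl mua).
Qed.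

Lemma kseg_suffix mu f : ksrc mu = krng f ->
  kseg (kcomp mu f) (kdeg mu) (kdeg (kcomp mu f)) = f.
Proof.
by move=> muf; apply: (ksegE (mu := mu) (nu := kid (ksrc f)));
  rewrite ?krng_id ?kcomp_idr.
Qed.

Lemma ksegP g a b : vle a b -> vle b (kdeg g) ->
  exists mu nu,
    [/\ ksrc mu = krng (kseg g a b), ksrc (kseg g a b) = krng nu,
        g = kcomp mu (kcomp (kseg g a b) nu), kdeg mu = a
      & kdeg (kseg g a b) = vsub b a] /\ kdeg nu = vsub (kdeg g) b.
Proof.
move=> ab bg.
have [s1 e1 d1 d2] := kfactP bg.
have ab' : vle a (kdeg (kfact g b).1) by rewrite d1.
have [s2 e2 d3 d4] := kfactP ab'.
exists (kfact (kfact g b).1 a).1, (kfact g b).2; rewrite /kseg; split=> //.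
split=> //; last by rewrite d4 d1.
- by rewrite -s1 -[in RHS]e2 ksrc_comp.
- by rewrite kcomp_assoc ?e2 ?e1 // -s1 -[in RHS]e2 ksrc_comp.
Qed.

Lemma kdeg_kseg g a b : vle a b -> vle b (kdeg g) -> kdeg (kseg g a b) = vsub b a.
Proof. by move=> ab bg; have [mu [nu [[]]]] := ksegP ab bg. Qed.

Lemma kseg_compr g h a b : ksrc g = krng h -> vle a b -> vle b (kdeg g) ->
  kseg (kcomp g h) a b = kseg g a b.
Proof.
move=> gh ab bg.
have [mu [nu [[s1 s2 gE d1 d2] _]]] := ksegP ab bg.
have nuh : ksrc nu = krng h by rewrite -gh gE !ksrc_comp // krng_comp.
apply: (ksegE (mu := mu) (nu := kcomp nu h)) => //.
- by rewrite krng_comp.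
- by rewrite {1}gE -!kcomp_assoc ?krng_comp ?ksrc_comp.
- by rewrite kdeg_comp // d1 d2 vsubKC.
Qed.

Lemma kseg_comp g a b c : vle a b -> vle b c -> vle c (kdeg g) ->
  ksrc (kseg g a b) = krng (kseg g b c) /\
  kseg g a c = kcomp (kseg g a b) (kseg g b c).
Proof.
move=> ab bc cg.
have [mu [nu [[s1 s2 gE d1 d2] dnu]]] := ksegP ab (vle_trans bc cg).
have cb : vle (vsub c b) (kdeg nu).
  by move=> i; rewrite dnu /vsub; have := bc i; have := cg i; lia.
have [t1 e1 d3 _] := kfactP cb.
set f := kseg g a b in s1 s2 gE d2 *.
set nu1 := (kfact nu (vsub c b)).1 in t1 e1 d3 *.
set nu2 := (kfact nu (vsub c b)).2 in t1 e1 d3 *.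
have fnu1 : ksrc f = krng nu1 by rewrite s2 -e1 krng_comp.
have segE : kseg g b c = nu1.
  apply: (ksegE (mu := kcomp mu f) (nu := nu2)) => //.
  - by rewrite ksrc_comp.
  - by rewrite e1 gE kcomp_assoc.
  - by rewrite kdeg_comp // d1 d2 vsubKC.
  - by rewrite !kdeg_comp ?ksrc_comp // d1 d2 d3 !vsubKC.
rewrite segE; split=> //.
apply: (ksegE (mu := mu) (nu := nu2)) => //.
- by rewrite krng_comp.
- by rewrite ksrc_comp.
- by rewrite {1}gE -e1 (kcomp_assoc (f := f)).
- rewrite !kdeg_comp ?krng_comp // d1 d2 d3 -(vsub_split ab bc).
  exact: vsubKC (vle_trans ab bc).
Qed.

Lemma kseg_id g a : vle a (kdeg g) -> kseg g a a = kid (krng (kseg g a a)).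
Proof. by move=> ag; apply: kdeg0_kid; rewrite kdeg_kseg ?vsubvv. Qed.

Lemma krng_kseg g a b : vle a b -> vle b (kdeg g) ->
  krng (kseg g a b) = krng (kseg g a a).
Proof.
by move=> ab bg; have [fg {1}->] := kseg_comp (vle_refl a) ab bg; rewrite krng_comp.
Qed.

Lemma ksrc_kseg g a b : vle a b -> vle b (kdeg g) ->
  ksrc (kseg g a b) = krng (kseg g b b).
Proof. by move=> ab bg; have [] := kseg_comp ab (vle_refl b) bg. Qed.

End Factorisation.

Section GraphMorphisms.
Variables (k : nat) (L : kgraph k).
Implicit Types (w y : gpath L) (a b c p : nvec k).

Lemma gmorP w a b : is_graph_morphism w -> vle a b -> ele b (pdeg w) ->
  [/\ krng (pmor w a b) = pvert w a, ksrc (pmor w a b) = pvert w b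
    & kdeg (pmor w a b) = vsub b a].
Proof. by case=> _ [gw _]; apply: gw. Qed.

Lemma gmor_comp w a b c : is_graph_morphism w -> vle a b -> vle b c ->
  ele c (pdeg w) -> pmor w a c = kcomp (pmor w a b) (pmor w b c).
Proof. by case=> _ [_ gw]; apply: gw. Qed.

Lemma gmor_id w a : is_graph_morphism w -> ele a (pdeg w) ->
  pmor w a a = kid (pvert w a).
Proof. by case=> gw _; apply: gw. Qed.

Lemma gmor_kseg w a b : is_graph_morphism w -> vle a b -> ele b (pdeg w) ->
  pmor w a b = kseg (pmor w (vzero k) b) a b.
Proof.
move=> gw ab bw; have aw := ele_vle ab bw.
have [_ s_a d_a] := gmorP gw (vle0 a) aw; have [r_ab _ d_ab] := gmorP gw ab bw.
have := kseg_suffix (f := pmor w a b) (mu := pmor w (vzero k) a).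
rewrite (gmor_comp gw (vle0 a) ab bw) kdeg_comp s_a ?r_ab //.
by rewrite d_a d_ab vsubv0 vsubKC // => ->.
Qed.

Lemma shift_graph_morphism y p : is_graph_morphism y -> ele p (pdeg y) ->
  is_graph_morphism (shift y p).
Proof.
move=> gy py; split; [|split].
- by move=> a ay; rewrite /pvert /=; apply: gmor_id => //; apply: ele_esub.
- move=> a b ab ay; have [r s d] := gmorP gy (vle_add2r p ab) (ele_esub py ay).
  split=> //=; rewrite d; apply: nvec_ext => i; rewrite /vsub /vadd; lia.
- move=> a b c ab bc cy /=.
  by apply: gmor_comp => //; [apply: vle_add2r | apply: vle_add2r | apply: ele_esub].
Qed.

Lemma shift_boundary_path y p : boundary_path y -> ele p (pdeg y) ->
  boundary_path (shift y p).
Proof.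
move=> [gy [ny [ny_y ny_max]]] py; split; first exact: shift_graph_morphism.
exists (vsub ny p); split=> /=; first exact: ele_vsub.
move=> P nyP Py i Pi; apply: (ny_max (vadd P p)).
- by move=> j; have := nyP j; rewrite /vsub /vadd; lia.
- exact: ele_esub.
- by move: Pi; have := py i; rewrite /esub /vadd; case: (pdeg y i) => //= d pd [<-];
    rewrite subnK.
Qed.

End GraphMorphisms.

Section Concat.
Variables (k : nat) (L : kgraph k) (l : kM L) (w : gpath L).
Hypotheses (gw : is_graph_morphism w) (src_l : ksrc l = pvert w (vzero k)).
Implicit Types (a b c N : nvec k).

Let init N := kcomp l (pmor w (vzero k) N).

Lemma init_src N : ele N (pdeg w) -> ksrc l = krng (pmor w (vzero k) N).
Proof. by move=> Nw; have [-> _ _] := gmorP gw (vle0 N) Nw. Qed.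

Lemma kdeg_init N : ele N (pdeg w) -> kdeg (init N) = vadd (kdeg l) N.
Proof.
move=> Nw; have [_ _ d] := gmorP gw (vle0 N) Nw.
by rewrite /init kdeg_comp ?d ?vsubv0 //; apply: init_src.
Qed.

Lemma init_comp a b : vle a b -> ele b (pdeg w) ->
  ksrc (init a) = krng (pmor w a b) /\ init b = kcomp (init a) (pmor w a b).
Proof.
move=> ab bw; have aw := ele_vle ab bw.
have [_ s_a _] := gmorP gw (vle0 a) aw; have [r_ab _ _] := gmorP gw ab bw.
have a_ab : ksrc (pmor w (vzero k) a) = krng (pmor w a b) by rewrite s_a r_ab.
rewrite /init ksrc_comp ?(init_src aw) //; split=> //.
by rewrite (gmor_comp gw (vle0 a) ab bw) (kcomp_assoc (init_src aw) a_ab).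
Qed.

(* [concat] cuts (l w)(a,b) out of init ((b \/ d(l)) - d(l)); any longer
   initial path of l w yields the same segment. *)
Lemma concat_morE a b N : vle a b -> ele N (pdeg w) -> vle (vsub b (kdeg l)) N ->
  pmor (concat l w) a b = kseg (init N) a b.
Proof.
move=> ab Nw bN; set c := vsub (vmax b (kdeg l)) (kdeg l).
have cN : vle c N by move=> i; have := bN i; rewrite /c /vsub /vmax; lia.
have cw := ele_vle cN Nw; have [src_c ->] := init_comp cN Nw.
rewrite kseg_compr // kdeg_init //; exact: vle_vadd_vsub_vmax (vle_refl b).
Qed.

Lemma concat_mor_kseg a b c : vle a b -> vle b c -> ele c (pdeg (concat l w)) ->
  let N := vsub (vmax c (kdeg l)) (kdeg l) in
  pmor (concat l w) a b = kseg (init N) a b /\ vle b (kdeg (init N)).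
Proof.
move=> ab bc cz N; have Nw : ele N (pdeg w) := ele_vsub_vmax cz.
split; first by apply: concat_morE => //; apply: vle_vsub_vmax.
by rewrite kdeg_init //; apply: vle_vadd_vsub_vmax.
Qed.

Lemma concat_graph_morphism : is_graph_morphism (concat l w).
Proof.
have bb b := vle_refl b.
split; [|split].
- move=> a az; rewrite /pvert.
  by have [-> ?] := concat_mor_kseg (bb a) (bb a) az; apply: kseg_id.
- move=> a b ab bz; rewrite /pvert.
  have [-> bd] := concat_mor_kseg ab (bb b) bz.
  have [-> _] := concat_mor_kseg (bb a) ab bz.
  have [-> _] := concat_mor_kseg (bb b) (bb b) bz.
  by rewrite krng_kseg ?ksrc_kseg ?kdeg_kseg.
- move=> a b c ab bc cz.
  have [-> cd] := concat_mor_kseg (vle_trans ab bc) (bb c) cz.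
  have [-> _] := concat_mor_kseg ab bc cz.
  have [-> _] := concat_mor_kseg bc (bb c) cz.
  by have [_ ->] := kseg_comp ab bc cd.
Qed.

Lemma concat_mor_init a b : vle a b -> vle b (kdeg l) ->
  pmor (concat l w) a b = kseg l a b.
Proof.
move=> ab bl; rewrite (concat_morE ab (ele0 _)).
  by rewrite /init (gmor_id gw (ele0 _)) -src_l kcomp_idr.
by move=> i; have := bl i; rewrite /vsub /vzero; lia.
Qed.

Lemma concat_mor_shift a b : vle a b -> ele b (pdeg w) ->
  pmor (concat l w) (vadd (kdeg l) a) (vadd (kdeg l) b) = pmor w a b.
Proof.
move=> ab bw; have aw := ele_vle ab bw.
have [src_a initE] := init_comp ab bw.
rewrite (concat_morE (N := b)) //; last first.
- by move=> i; rewrite /vsub /vadd addKn.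
- exact: vle_add2l.
by rewrite -(kdeg_init aw) -(kdeg_init bw) initE kseg_suffix.
Qed.

Lemma concat_boundary_path : boundary_path w -> boundary_path (concat l w).
Proof.
move=> [_ [nw [nw_w nw_max]]]; split; first exact: concat_graph_morphism.
exists (vadd (kdeg l) nw); split=> /=; first exact: ele_eadd.
move=> P nwP Pz i Pi [f [f_rng f_deg]]; set s := vsub P (kdeg l).
have Ps : P = vadd (kdeg l) s.
  by apply: nvec_ext => j; have := nwP j; rewrite /s /vadd /vsub; lia.
have sw : ele s (pdeg w).
  by move=> j; have := Pz j; rewrite /s /eadd /vsub; case: (pdeg w j) => //= d; lia.
apply: (nw_max s _ sw i).
- by move=> j; have := nwP j; rewrite /s /vadd /vsub; lia.
- by move: Pi; rewrite /s /eadd /vsub; case: (pdeg w i) => //= d [<-]; rewrite addKn.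
- by exists f; rewrite /pvert -(concat_mor_shift (vle_refl s) sw) -Ps.
Qed.

End Concat.

Unset Implicit Arguments.

Theorem proposition3p11 (k : nat) (L : kgraph k) (x y : gpath L)
    (m n p q : nvec k)
    (hx : inP x m n) (hy : inP y p q)
    (hp : ~ ele p (pdeg y))
    (happ : approx x n y p) :
  let z := concat (pmor x (vzero k) (emin n (pdeg x)))
                  (shift y (emin p (pdeg y))) in
  boundary_path z /\
  (emin m (pdeg x) = emin m (pdeg z) /\ emin n (pdeg x) = emin n (pdeg z)) /\
  (pmor x (emin m (pdeg x)) (emin n (pdeg x))
     = pmor z (emin m (pdeg z)) (emin n (pdeg z)) /\
   pmor y (emin p (pdeg y)) (emin q (pdeg y))
     = pmor z (emin n (pdeg z)) (emin (vsub (vadd n q) p) (pdeg z))).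
Proof.
case: hx => [[gx _] mn _]; case: hy => y_bd pq _; case: happ => vxy dxy z.
rewrite {}/z; set n' := emin n (pdeg x) in vxy dxy *.
set p' := emin p (pdeg y) in vxy dxy *.
set lam := pmor x (vzero k) n'; set z := concat lam (shift y p').
have x_n' : ele n' (pdeg x) := ele_emin n _.
have y_p' : ele p' (pdeg y) := ele_emin p _.
have [_ lam_src dlam] := gmorP gx (vle0 n') x_n'; rewrite vsubv0 in dlam.
have gw := shift_graph_morphism (proj1 y_bd) y_p'.
have hs : ksrc lam = pvert (shift y p') (vzero k).
  by rewrite lam_src vxy /pvert /= vadd0v.
have [Em En Eq] := emin_eadd_esub mn pq dxy.
have -> : pdeg z = eadd n' (esub (pdeg y) p') by rewrite /= dlam.
rewrite Em En Eq; split; [|split=> //; split].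
- exact: concat_boundary_path (shift_boundary_path y_bd y_p').
- have m'n' : vle (emin m (pdeg x)) n' := vle_emin _ mn.
  by rewrite concat_mor_init ?dlam // -(gmor_kseg gx).
- have q'_p' := ele_vsub (emin p (pdeg y)) (ele_emin q (pdeg y)).
  have := concat_mor_shift gw hs (vle0 _) q'_p'; rewrite vaddv0 dlam => ->.
  by rewrite /= vadd0v vsubK //; apply: vle_emin.
Qed.
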